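(* Let $\mathsf{A}$ be a function from the pairs $i<j$ of $\{0,\dots,n\}$ into the nonnegative integers satisfying condition (!), and suppose $\mathsf{A}$ is indecomposable. Then $\mathsf{A}(i,n)>0$ for every $i<n$.
   Context: For integers $p,q,r$ write $r=p\,!\,q$ if $r\ge\min(p-1,q)$, with equality holding unless $p=q$. A function $\mathsf{A}$ on pairs $a<b$ of a finite linear order into the nonnegative integers satisfies (!) if $\mathsf{A}(a,b)=\mathsf{A}(b,c)\,!\,\mathsf{A}(a,c)$ whenever $a<b<c$. For such functions $\mathsf{B},\mathsf{C}$ with bases $B,C$, $\mathsf{B}+\mathsf{C}$ has base $B$ followed by $C$, agrees with $\mathsf{B}$ on $B$ and $\mathsf{C}$ on $C$, and takes value $0$ on pairs $(b,c)$ with $b\in B$, $c\in C$; functions are identified when an order-preserving bijection of the bases carries one to the other. $\mathsf{A}$ is indecomposable if there are no $\mathsf{B},\mathsf{C}$ with nonempty bases such that $\mathsf{A}=\mathsf{B}+\mathsf{C}$. *)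

From Stdlib Require Import ZArith Arith Lia.
Open Scope Z_scope.

(* r = p ! q  :<->  r >= min(p-1,q), with equality unless p = q (integers). *)
Definition bang (p q r : Z) : Prop :=
  r >= Z.min (p - 1) q /\ (p <> q -> r = Z.min (p - 1) q).

Close Scope Z_scope.

(* A finite linear order of size m is represented (up to order-preserving
   bijection) by {0,...,m-1}; a function on its pairs a<b is a
   nat -> nat -> nat of which only the values A a b with a < b < m matter. *)
Definition satisfies_bang (m : nat) (A : nat -> nat -> nat) : Prop :=
  forall a b c : nat, a < b -> b < c -> c < m ->
    bang (Z.of_nat (A b c)) (Z.of_nat (A a c)) (Z.of_nat (A a b)).

(* B + C : base {0..m-1} followed by {m..m+l-1} (a copy of C's base). *)
Definition fsum (m : nat) (B C : nat -> nat -> nat) : nat -> nat -> nat :=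
  fun i j => if j <? m then B i j
             else if i <? m then 0
             else C (i - m) (j - m).

Definition indecomposable (N : nat) (A : nat -> nat -> nat) : Prop :=
  ~ exists (m l : nat) (B C : nat -> nat -> nat),
      0 < m /\ 0 < l /\ m + l = N /\
      satisfies_bang m B /\ satisfies_bang l C /\
      (forall i j, i < j -> j < N -> A i j = fsum m B C i j).

From Stdlib Require Import ZArith Arith Lia.

(* Let k < n be the largest index with A(k,n) = 0.  By (!), a zero A(b,n)
   forces A(a,n) = 0 for every a < b, so column n vanishes exactly on
   0..k; and for a <= k < b < n the values A(a,n) = 0 <> A(b,n) force
   A(a,b) = 0.  Hence A vanishes on all pairs straddling k | k+1 and
   splits there as a sum, contradicting indecomposability. *)

Lemma bang_0_l (q r : Z) : (0 <= r)%Z -> bang 0 q r -> q = 0%Z.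
Proof. unfold bang; lia. Qed.

Lemma bang_0_m (p r : Z) : (0 <= r)%Z -> p <> 0%Z -> bang p 0 r -> r = 0%Z.
Proof. unfold bang; lia. Qed.

Section SatisfiesBang.

Variables (m : nat) (A : nat -> nat -> nat).
Hypothesis hA : satisfies_bang m A.

Lemma satisfies_bang_zero_down a b c :
  a < b -> b < c -> c < m -> A b c = 0 -> A a c = 0.
Proof.
  intros hab hbc hc hbc0.
  pose proof (hA a b c hab hbc hc) as hbang. rewrite hbc0 in hbang.
  apply bang_0_l in hbang; lia.
Qed.

Lemma satisfies_bang_zero_split a b c :
  a < b -> b < c -> c < m -> A a c = 0 -> A b c <> 0 -> A a b = 0.
Proof.
  intros hab hbc hc hac0 hbc0.
  pose proof (hA a b c hab hbc hc) as hbang. rewrite hac0 in hbang.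
  apply bang_0_m in hbang; lia.
Qed.

End SatisfiesBang.

Lemma satisfies_bang_le m m' A :
  m' <= m -> satisfies_bang m A -> satisfies_bang m' A.
Proof. intros hm hA a b c hab hbc hc. apply hA; lia. Qed.

Lemma satisfies_bang_shift d l A :
  satisfies_bang (d + l) A -> satisfies_bang l (fun i j => A (i + d) (j + d)).
Proof. intros hA a b c hab hbc hc. apply hA; lia. Qed.

Lemma fsum_zero_block m N A :
  (forall i j, i < m <= j -> j < N -> A i j = 0) ->
  forall i j, i < j -> j < N -> A i j = fsum m A (fun i j => A (i + m) (j + m)) i j.
Proof.
  intros hblock i j hij hj. unfold fsum.
  destruct (Nat.ltb_spec j m); [reflexivity|].
  destruct (Nat.ltb_spec i m); [apply hblock; lia|].
  rewrite !Nat.sub_add by lia. reflexivity.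
Qed.

Lemma zero_block_not_indecomposable m N A :
  0 < m < N -> satisfies_bang N A ->
  (forall i j, i < m <= j -> j < N -> A i j = 0) ->
  ~ indecomposable N A.
Proof.
  intros hm hA hblock hI. apply hI.
  exists m, (N - m), A, (fun i j => A (i + m) (j + m)).
  split; [lia|split; [lia|split; [lia|split; [|split]]]].
  - exact (satisfies_bang_le N m A ltac:(lia) hA).
  - apply satisfies_bang_shift. replace (m + (N - m)) with N by lia. exact hA.
  - exact (fsum_zero_block m N A hblock).
Qed.

Lemma zero_block_of_last_zero n A k :
  satisfies_bang (S n) A -> k < n -> A k n = 0 ->
  (forall j, k < j < n -> A j n <> 0) ->
  forall i j, i < S k <= j -> j < S n -> A i j = 0.
Proof.
  intros hA hk hkn hlast i j hij hj.
  assert (hin : A i n = 0).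
  { destruct (Nat.eq_dec i k) as [->|hik]; [exact hkn|].
    apply (satisfies_bang_zero_down (S n) A hA i k n); lia. }
  destruct (Nat.eq_dec j n) as [->|hjn]; [exact hin|].
  apply (satisfies_bang_zero_split (S n) A hA i j n); try lia.
  apply hlast; lia.
Qed.

Lemma exists_last_below (P : nat -> Prop) (P_dec : forall x, {P x} + {~ P x}) t j :
  j < t -> P j -> exists k, k < t /\ P k /\ forall x, k < x < t -> ~ P x.
Proof.
  induction t as [|t IH]; intros hj pj; [lia|].
  destruct (P_dec t) as [pt|npt].
  - exists t. repeat split; [lia|exact pt|lia].
  - destruct (Nat.eq_dec j t) as [->|hjt]; [contradiction|].
    destruct (IH ltac:(lia) pj) as [k [hk [pk hmax]]].
    exists k. repeat split; [lia|exact pk|].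
    intros x hx. destruct (Nat.eq_dec x t) as [->|hxt]; [exact npt|].
    apply hmax; lia.
Qed.

Theorem lemma5p7 (n : nat) (A : nat -> nat -> nat) :
  satisfies_bang (S n) A -> indecomposable (S n) A ->
  forall i : nat, i < n -> 0 < A i n.
Proof.
  intros hA hI i hi. apply Nat.neq_0_lt_0. intro hin.
  destruct (exists_last_below (fun x => A x n = 0)
              (fun x => Nat.eq_dec (A x n) 0) n i hi hin)
    as [k [hk [hkn hlast]]].
  apply (zero_block_not_indecomposable (S k) (S n) A); [lia|exact hA| |exact hI].
  exact (zero_block_of_last_zero n A k hA hk hkn hlast).
Qed.
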